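(* Consider the random-field Ising model: $E=\{-1,+1\}$, $E'=\{h_1,\dots,h_L\}\subset\mathbb R$ finite with $L\ge 2$, $\alpha[h](\sigma)=\frac{e^{h\sigma}}{2\cosh h}$ for $h\in E'$, $\sigma\in E$, $\pi\in\mathcal P(E')$ with $\pi(h)>0$ for all $h\in E'$, and $F(\nu)=G(\nu(+1)-\nu(-1))$ where $G:[-1,1]\to\mathbb R$ is twice continuously differentiable with $G'$ injective. Then the non-degeneracy condition 2) holds automatically: any two distinct minimizers $\hat\nu\neq\hat\nu'$ of $\Phi[\pi]$ on $\mathcal P(E)^{E'}$ have distinct stability vectors $B_{\hat\nu}\neq B_{\hat\nu'}$.
   Context: Free energy: $\Phi[\pi](\hat\nu)=F(\sum_h\pi(h)\hat\nu(h))+\sum_h\pi(h)S(\hat\nu(h)|\alpha[h])$ for $\hat\nu=(\hat\nu(h))_{h\in E'}\in\mathcal P(E)^{E'}$, $S(p|q)=\sum_a p(a)\log(p(a)/q(a))$. Write $\pi\cdot\hat\nu=\sum_h\pi(h)\hat\nu(h)$. For a minimizer $\hat\nu$, the stability vector $B_{\hat\nu}\in T\mathcal P(E')=\{x\in\mathbb R^{E'}:\sum_hx(h)=0\}$ is the vector with $\langle x,B_{\hat\nu}\rangle=-\big(dF_{\pi\cdot\hat\nu}(\sum_hx(h)\hat\nu(h))+\sum_hx(h)S(\hat\nu(h)|\alpha[h])\big)$ for all $x\in T\mathcal P(E')$, where $dF_\nu$ is the differential of $F$ on the tangent space $\{y\in\mathbb R^E:\sum y=0\}$ of the simplex $\mathcal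 P(E)$. *)

From HB Require Import structures.
From mathcomp Require Import all_boot all_order all_algebra.
From mathcomp Require Import all_classical all_reals all_analysis.
Set Implicit Arguments. Unset Strict Implicit. Unset Printing Implicit Defensive.
Import Order.TTheory GRing.Theory Num.Theory.
Import numFieldNormedType.Exports.
Local Open Scope classical_set_scope.
Local Open Scope ring_scope.

(* Random-field Ising model.  E = {-1,+1} is encoded as bool (true = +1).
   E' = {h_1,...,h_L} is encoded by an injective map h : 'I_L -> R. *)

Section RFIM.
Variable R : realType.

Definition spin (s : bool) : R := if s then 1 else -1.

Definition alpha (hh : R) (s : bool) : R :=
  expR (hh * spin s) / (expR hh + expR (- hh)).

(* relative entropy S(p|q) = sum_a p(a) log (p(a)/q(a)) (0 log 0 = 0 since ln 0 = 0) *)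
Definition relent (p q : bool -> R) : R :=
  \sum_(a : bool) p a * ln (p a / q a).

Definition is_prob (T : finType) (p : T -> R) : Prop :=
  (forall t, 0 <= p t) /\ \sum_(t : T) p t = 1.

Definition is_config (L : nat) (nu : 'I_L -> bool -> R) : Prop :=
  forall i, is_prob (nu i).

Definition mixt (L : nat) (pi : 'I_L -> R) (nu : 'I_L -> bool -> R) : bool -> R :=
  fun a => \sum_(i < L) pi i * nu i a.

Definition FIsing (G : R -> R) (nu : bool -> R) : R := G (nu true - nu false).

Definition dFIsing (G' : R -> R) (nu : bool -> R) (y : bool -> R) : R :=
  G' (nu true - nu false) * (y true - y false).

Definition Phi (L : nat) (G : R -> R) (h : 'I_L -> R) (pi : 'I_L -> R)
  (nu : 'I_L -> bool -> R) : R :=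
  FIsing G (mixt pi nu) + \sum_(i < L) pi i * relent (nu i) (alpha (h i)).

Definition is_minimizer (L : nat) (G : R -> R) (h : 'I_L -> R) (pi : 'I_L -> R)
  (nu : 'I_L -> bool -> R) : Prop :=
  is_config nu /\
  forall nu' : 'I_L -> bool -> R, is_config nu' -> Phi G h pi nu <= Phi G h pi nu'.

Definition is_stability_vector (L : nat) (G' : R -> R) (h : 'I_L -> R)
  (pi : 'I_L -> R) (nu : 'I_L -> bool -> R) (B : 'I_L -> R) : Prop :=
  \sum_(i < L) B i = 0 /\
  forall x : 'I_L -> R, \sum_(i < L) x i = 0 ->
    \sum_(i < L) x i * B i =
      - (dFIsing G' (mixt pi nu) (fun a => \sum_(i < L) x i * nu i a)
         + \sum_(i < L) x i * relent (nu i) (alpha (h i))).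

Definition deriv_within (I : set R) (f : R -> R) (x l : R) : Prop :=
  (fun y => (f y - f x) / (y - x)) @ within I (x^') --> l.

Definition closed_unit_interval : set R := [set x | -1 <= x <= 1].

Definition C2_on (I : set R) (G G1 G2 : R -> R) : Prop :=
  (forall x, I x -> deriv_within I G x (G1 x) /\ deriv_within I G1 x (G2 x))
  /\ {within I, continuous G2}.

End RFIM.

From HB Require Import structures.
From mathcomp Require Import all_boot all_order all_algebra.
From mathcomp Require Import all_classical all_reals all_analysis.
From mathcomp Require Import ring lra.
Import Order.TTheory GRing.Theory Num.Theory.
Import numFieldNormedType.Exports.

(* A minimizer solves the mean-field equations: moving a single site towards the
   tilted measure [alpha[h] exp (- g sigma) / Z_h(g)], with [g = G'(m)] at the total
   magnetization [m], cannot lower the free energy, which forces every site to be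
   that Gibbs measure.  Its free energy per site is then [- ln Z_h(g)], so the
   stability vector satisfies [B(h) - B(h') = ln Z_h(g) - ln Z_h'(g)] with
   [Z_h(g) = cosh (h - g) / cosh h].  For two distinct fields this is injective in
   [g]; equal stability vectors therefore give equal [g], hence equal minimizers. *)

Set Implicit Arguments.
Unset Strict Implicit.
Unset Printing Implicit Defensive.

Local Open Scope ring_scope.

Section Entropy.
Variable R : realType.
Implicit Types (y z c t : R) (p q : bool -> R).

Lemma sub_lt_mul_ln_div y z : 0 <= y -> 0 < z -> y != z -> y - z < y * ln (y / z).
Proof.
move=> y0 z0 yz; have [->|yn0] := eqVneq y 0; first by rewrite mul0r sub0r oppr_lt0.
have yp : 0 < y by rewrite lt0r yn0.
have zy0 : 0 < z / y by rewrite divr_gt0.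
have ln_zy : ln (z / y) != 0.
  apply: contra_neq yz => /(congr1 expR); rewrite lnK ?posrE // expR0.
  by move=> /divr1_eq ->.
have := expR_gt1Dx ln_zy; rewrite lnK ?posrE // => lt_ln.
have e : y * (z / y - 1) = z - y by field; rewrite gt_eqF.
have : ln (z / y) < z / y - 1 by lra.
rewrite -(ltr_pM2l yp) e => lt_mul.
rewrite -[y / z]invf_div lnV ?posrE //; lra.
Qed.

Lemma sub_le_mul_ln_div y z : 0 <= y -> 0 < z -> y - z <= y * ln (y / z).
Proof.
move=> y0 z0; have [->|yz] := eqVneq y z; last exact/ltW/sub_lt_mul_ln_div.
by rewrite subrr divff ?gt_eqF // ln1 mulr0.
Qed.

Lemma mul_ln_div_tangent y z c : 0 <= y -> 0 < z -> 0 < c ->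
  y * ln (z / c) + y - z <= y * ln (y / c).
Proof.
move=> y0 z0 c0; have [->|yn0] := eqVneq y 0; first by rewrite !mul0r; lra.
have yp : 0 < y by rewrite lt0r yn0.
have -> : y / c = y / z * (z / c) by rewrite mulrA divfK ?gt_eqF.
rewrite [ln (_ / z * _)]lnM ?posrE ?divr_gt0 // mulrDr.
have := sub_le_mul_ln_div y0 z0; lra.
Qed.

Lemma mul_ln_div_convex a c t : 0 <= a -> 0 < c -> 0 < t -> t <= 1 ->
  ((1 - t) * a + t * c) * ln (((1 - t) * a + t * c) / c) <= (1 - t) * (a * ln (a / c)).
Proof.
move=> a0 c0 t0 t1; set z := (1 - t) * a + t * c.
have z0 : 0 < z by rewrite /z ltr_wpDl ?mulr_gt0 // mulr_ge0 // subr_ge0.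
have tan_a := mul_ln_div_tangent a0 z0 c0.
have := mul_ln_div_tangent (ltW c0) z0 c0; rewrite divff ?gt_eqF // ln1 mulr0 => tan_c.
have -> : z * ln (z / c) =
    (1 - t) * (a * ln (z / c) + a - z) + t * (c * ln (z / c) + c - z) by rewrite /z; ring.
have : (1 - t) * (a * ln (z / c) + a - z) <= (1 - t) * (a * ln (a / c)).
  by rewrite ler_wpM2l // subr_ge0.
have : t * (c * ln (z / c) + c - z) <= 0 by rewrite pmulr_rle0 //; lra.
lra.
Qed.

Lemma relent_le0_eq p q : is_prob p -> is_prob q -> (forall a, 0 < q a) ->
  relent p q <= 0 -> p = q.
Proof.
move=> [p0 p1] [_ q1] q_gt0 S_le0; apply: funext => a; apply/eqP.
apply: contraLR S_le0 => pq; rewrite -ltNge.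
have sum0 : \sum_b (p b - q b) = 0 by rewrite sumrB p1 q1 subrr.
rewrite (bigD1 a) //= in sum0; rewrite /relent (bigD1 a) //=.
have := sub_lt_mul_ln_div (p0 a) (q_gt0 a) pq.
have : \sum_(b | b != a) (p b - q b) <= \sum_(b | b != a) p b * ln (p b / q b).
  by apply: ler_sum => b _; exact: sub_le_mul_ln_div.
lra.
Qed.

Lemma relent_self q : (forall a, 0 < q a) -> relent q q = 0.
Proof. by move=> q_gt0; rewrite /relent big1 // => a _; rewrite divff ?gt_eqF // ln1 mulr0. Qed.

Lemma relent_convex p q t : is_prob p -> (forall a, 0 < q a) -> 0 < t -> t <= 1 ->
  relent (fun a => (1 - t) * p a + t * q a) q <= (1 - t) * relent p q.
Proof.
move=> [p0 _] q_gt0 t0 t1; rewrite /relent mulr_sumr; apply: ler_sum => a _.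
exact: mul_ln_div_convex.
Qed.

Lemma is_prob_mix p q t : is_prob p -> is_prob q -> 0 <= t <= 1 ->
  is_prob (fun a => (1 - t) * p a + t * q a).
Proof.
move=> [p0 p1] [q0 q1] /andP[t0 t1]; split => [a|].
  by rewrite addr_ge0 ?mulr_ge0 ?subr_ge0.
by rewrite big_split -!mulr_sumr p1 q1 !mulr1 /= subrK.
Qed.

End Entropy.

Section Gibbs.
Variable R : realType.
Implicit Types (hh g : R) (p : bool -> R).

Definition magn p : R := p true - p false.

Definition Zgibbs hh g : R := \sum_s alpha hh s * expR (- (g * spin R s)).

Definition gibbs hh g s : R := alpha hh s * expR (- (g * spin R s)) / Zgibbs hh g.

Lemma alpha_gt0 hh s : 0 < alpha hh s.
Proof. by rewrite divr_gt0 ?addr_gt0 ?expR_gt0. Qed.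

Lemma Zgibbs_gt0 hh g : 0 < Zgibbs hh g.
Proof. by rewrite /Zgibbs big_bool addr_gt0 // mulr_gt0 ?alpha_gt0 ?expR_gt0. Qed.

Lemma gibbs_gt0 hh g s : 0 < gibbs hh g s.
Proof. by rewrite divr_gt0 ?Zgibbs_gt0 // mulr_gt0 ?alpha_gt0 ?expR_gt0. Qed.

Lemma gibbs_prob hh g : is_prob (gibbs hh g).
Proof.
split=> [s|]; first exact/ltW/gibbs_gt0.
by rewrite -mulr_suml divff // gt_eqF ?Zgibbs_gt0.
Qed.

Lemma relent_gibbs p hh g : is_prob p ->
  relent p (alpha hh) + g * magn p = relent p (gibbs hh g) - ln (Zgibbs hh g).
Proof.
move=> [p0 p1]; have Z0 := Zgibbs_gt0 hh g.
have site s : p s * ln (p s / alpha hh s) + g * spin R s * p s =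
    p s * ln (p s / gibbs hh g s) - p s * ln (Zgibbs hh g).
  have [->|ps0] := eqVneq (p s) 0; first by rewrite !(mul0r, mulr0) subrr addr0.
  have ps : 0 < p s by rewrite lt0r ps0 p0.
  have a0 := alpha_gt0 hh s; have e0 := expR_gt0 (g * spin R s).
  have -> : p s / gibbs hh g s = p s / alpha hh s * (Zgibbs hh g * expR (g * spin R s)).
    by rewrite /gibbs expRN; field; rewrite !gt_eqF.
  rewrite [ln (_ / _ * _)]lnM ?posrE ?(divr_gt0 ps a0) ?(mulr_gt0 Z0 e0) //.
  by rewrite [ln (_ * expR _)]lnM ?posrE // expRK; ring.
have -> : relent p (gibbs hh g) - ln (Zgibbs hh g) =
    \sum_s (p s * ln (p s / gibbs hh g s) - p s * ln (Zgibbs hh g)).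
  by rewrite sumrB -mulr_suml p1 mul1r.
rewrite -(eq_bigr _ (fun s _ => site s)).
by rewrite big_split /relent !big_bool /magn /spin /=; ring.
Qed.

Lemma relent_mix_gibbs p hh g t : is_prob p -> 0 < t -> t <= 1 ->
  relent (fun s => (1 - t) * p s + t * gibbs hh g s) (alpha hh) - relent p (alpha hh)
  <= - t * (relent p (gibbs hh g) + g * (magn (gibbs hh g) - magn p)).
Proof.
move=> p_prob t0 t1; set pt := fun s => _.
have pt_prob : is_prob pt by apply: is_prob_mix => //; [exact: gibbs_prob | lra].
have := relent_convex p_prob (gibbs_gt0 hh g) t0 t1.
have := relent_gibbs hh g pt_prob; have := relent_gibbs hh g p_prob.
have -> : magn pt = magn p + t * (magn (gibbs hh g) - magn p) by rewrite /magn /pt; ring.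
nra.
Qed.

Lemma Zgibbs_expR hh g :
  Zgibbs hh g = (expR hh * expR (- g) + expR (- hh) * expR g) / (expR hh + expR (- hh)).
Proof.
rewrite /Zgibbs big_bool /alpha /spin /= !mulr1 !mulrN1 opprK.
by field; rewrite gt_eqF ?addr_gt0 ?expR_gt0.
Qed.

Lemma ln_Zgibbs_sub_inj hi hj g g' : hi != hj ->
  ln (Zgibbs hi g) - ln (Zgibbs hj g) = ln (Zgibbs hi g') - ln (Zgibbs hj g') -> g = g'.
Proof.
move=> hij lnE; have Z0 := Zgibbs_gt0.
have : Zgibbs hi g * Zgibbs hj g' = Zgibbs hi g' * Zgibbs hj g.
  by apply: ln_inj; rewrite ?posrE ?mulr_gt0 // !lnM ?posrE //; lra.
rewrite !Zgibbs_expR !mulf_div.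
set Di := expR hi + _; set Dj := expR hj + _.
have Dij : Di * Dj != 0 by rewrite gt_eqF ?mulr_gt0 ?addr_gt0 ?expR_gt0.
move=> /(congr1 (fun x => x * (Di * Dj))); rewrite !divfK //.
set A := expR hi; set A' := expR (- hi); set B := expR hj; set B' := expR (- hj).
set b := expR (- g); set b' := expR g; set c := expR (- g'); set c' := expR g'.
move=> E; have : (A * B' - A' * B) * (b * c' - c * b') = 0.
  have -> : (A * B' - A' * B) * (b * c' - c * b') =
      (A * b + A' * b') * (B * c + B' * c') - (A * c + A' * c') * (B * b + B' * b') by ring.
  by rewrite E subrr.
move/eqP; rewrite mulf_eq0 !subr_eq0 /A /A' /B /B' /b /b' /c /c' -!expRD.
case/orP => /eqP /expR_inj E'; last lra.
by exfalso; move/negP: hij; apply; apply/eqP; lra.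
Qed.

End Gibbs.

Section Calculus.
Variable R : realType.

Lemma deriv_within_ball (I : set R) (f : R -> R) (x l : R) : deriv_within I f x l ->
  forall e : R, 0 < e -> exists2 d : R, 0 < d & forall y, I y -> y != x ->
    `|y - x| < d -> `|(f y - f x) / (y - x) - l| < e.
Proof.
move=> /cvgrPdist_lt df e e0; move: (df e e0).
rewrite near_withinE /= => /nbhs_ballP[d /= d0 near_x].
exists d => // y Iy yx yd; rewrite distrC.
by apply: near_x => //; rewrite /ball /= distrC.
Qed.

Lemma deriv_within_gain_le0 (I : set R) (f : R -> R) (x l a c : R) :
  deriv_within I f x l ->
  (forall t, 0 < t -> t <= 1 ->
    I (x + t * a) /\ t * c <= f (x + t * a) - f x - t * (l * a)) ->
  c <= 0.
Proof.
move=> df gain; have [a0|a_neq0] := eqVneq a 0.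
  by have [_] := gain 1 ltr01 (lexx 1); rewrite a0 !mulr0 addr0 subrr subr0 mul1r.
rewrite leNgt; apply/negP => c0.
have a_gt0 : 0 < `|a| by rewrite normr_gt0.
have e0 : 0 < c / (2 * `|a|) by rewrite divr_gt0 // mulr_gt0.
have [d d0 near_x] := deriv_within_ball df e0.
set t := Num.min 1 (d / (2 * `|a|)).
have t0 : 0 < t by rewrite lt_min ltr01 divr_gt0 // mulr_gt0.
have t1 : t <= 1 by rewrite ge_min lexx.
have td : t * (2 * `|a|) <= d by rewrite -ler_pdivlMr ?mulr_gt0 // ge_min lexx orbT.
have [Ix_t gain_t] := gain t t0 t1.
have dx : x + t * a - x = t * a by rewrite addrAC subrr add0r.
have ta0 : t * a != 0 by rewrite mulf_neq0 ?(gt_eqF t0).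
have := near_x (x + t * a) Ix_t; rewrite -subr_eq0 dx normrM (gtr0_norm t0).
move=> /(_ ta0); have -> : t * `|a| < d by have := mulr_gt0 t0 a_gt0; lra.
move=> /(_ isT); set q := (f _ - f x) / (t * a) => q_near.
have : f (x + t * a) - f x - t * (l * a) <= `|q - l| * (t * `|a|).
  have -> : f (x + t * a) - f x - t * (l * a) = (q - l) * (t * a) by rewrite /q mulrBl divfK //; ring.
  by apply: le_trans (ler_norm _) _; rewrite !normrM (gtr0_norm t0).
have : `|q - l| * (t * `|a|) <= c / (2 * `|a|) * (t * `|a|).
  by rewrite ler_pM2r ?mulr_gt0 // ltW.
have -> : c / (2 * `|a|) * (t * `|a|) = t * c / 2 by field; rewrite gt_eqF.
have : 0 < t * c by rewrite mulr_gt0.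
lra.
Qed.

End Calculus.

Section Configurations.
Variables (R : realType) (L : nat) (pi : 'I_L -> R).
Implicit Types (nu : 'I_L -> bool -> R) (p : bool -> R).

Lemma sum_indicator_sub (i j : 'I_L) (F : 'I_L -> R) :
  \sum_(k < L) ((k == i)%:R - (k == j)%:R) * F k = F i - F j.
Proof.
have pick l : \sum_(k < L) (k == l)%:R * F k = F l.
  rewrite (bigD1 l) //= eqxx mul1r big1 ?addr0 // => k /negbTE ->; exact: mul0r.
by rewrite -(pick i) -(pick j) -sumrB; apply: eq_bigr => k _; rewrite mulrBl.
Qed.

Lemma magn_mixt nu : magn (mixt pi nu) = \sum_(j < L) pi j * magn (nu j).
Proof. by rewrite /magn /mixt -sumrB; apply: eq_bigr => j _; rewrite mulrBr. Qed.

Lemma magn_prob p : is_prob p -> -1 <= magn p <= 1.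
Proof.
move=> [p0]; rewrite big_bool /magn /= => p1.
by have := p0 true; have := p0 false => ? ?; apply/andP; split; lra.
Qed.

Lemma magn_mixt_unit_interval nu : is_config nu -> (forall j, 0 <= pi j) ->
  \sum_(j < L) pi j = 1 -> closed_unit_interval (magn (mixt pi nu)).
Proof.
move=> nu_cf pi0 pi1; rewrite /closed_unit_interval /= magn_mixt.
have sum_pi c : \sum_(j < L) pi j * c = c by rewrite -mulr_suml pi1 mul1r.
apply/andP; split; [rewrite -[X in X <= _](sum_pi (-1)) | rewrite -[X in _ <= X](sum_pi 1)];
  apply: ler_sum => j _; rewrite ler_wpM2l //; by case/andP: (magn_prob (nu_cf j)).
Qed.

Lemma sum_dfwith (F : 'I_L -> (bool -> R) -> R) nu i p :
  \sum_(j < L) pi j * F j (dfwith nu i p j) =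
  \sum_(j < L) pi j * F j (nu j) + pi i * (F i p - F i (nu i)).
Proof.
rewrite (bigD1 i) // [in RHS](bigD1 i) // dfwithin.
rewrite (eq_bigr (fun j => pi j * F j (nu j))) => [|j ji]; last by rewrite dfwithout // eq_sym.
by rewrite /=; ring.
Qed.

Lemma is_config_dfwith nu i p : is_config nu -> is_prob p -> is_config (dfwith nu i p).
Proof. by move=> nu_cf p_prob j; case: dfwithP. Qed.

Lemma magn_mixt_dfwith nu i p :
  magn (mixt pi (dfwith nu i p)) = magn (mixt pi nu) + pi i * (magn p - magn (nu i)).
Proof. by rewrite !magn_mixt (sum_dfwith (fun _ q => magn q)). Qed.

Lemma Phi_dfwith (G : R -> R) (h : 'I_L -> R) nu i p :
  Phi G h pi (dfwith nu i p) - Phi G h pi nu =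
  G (magn (mixt pi nu) + pi i * (magn p - magn (nu i))) - G (magn (mixt pi nu))
  + pi i * (relent p (alpha (h i)) - relent (nu i) (alpha (h i))).
Proof.
rewrite /Phi /FIsing -![_ true - _ false]/(magn _) magn_mixt_dfwith.
by rewrite (sum_dfwith (fun j q => relent q (alpha (h j)))); ring.
Qed.

End Configurations.

Section Minimizer.
Variables (R : realType) (L : nat) (G : R -> R) (h pi : 'I_L -> R) (g : R).
Variable nu : 'I_L -> bool -> R.
Hypotheses (pi_gt0 : forall j, 0 < pi j) (pi_sum1 : \sum_(j < L) pi j = 1).
Hypothesis nu_min : is_minimizer G h pi nu.
Hypothesis dG : deriv_within (@closed_unit_interval R) G (magn (mixt pi nu)) g.

(* Moving site [i] towards the Gibbs measure [gam] by [t] changes the free energy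
   by at most the linear term minus [t pi_i S(nu_i | gam)], so [S(nu_i | gam) <= 0]. *)
Lemma minimizer_gibbs i : nu i = gibbs (h i) g.
Proof.
have [nu_cf nu_le] := nu_min.
set p := nu i; set gam := gibbs (h i) g.
apply: relent_le0_eq (nu_cf i) (gibbs_prob _ _) (gibbs_gt0 _ _) _.
rewrite -(pmulr_rle0 _ (pi_gt0 i)).
apply: (deriv_within_gain_le0 (a := pi i * (magn gam - magn p)) dG) => t t0 t1.
set pt := fun s => (1 - t) * p s + t * gam s.
have pt_prob : is_prob pt.
  by apply: is_prob_mix; [exact: nu_cf | exact: gibbs_prob | apply/andP; split; lra].
have shift : pi i * (magn pt - magn p) = t * (pi i * (magn gam - magn p)).
  by rewrite /magn /pt; ring.
split.
  rewrite -shift -magn_mixt_dfwith; apply: magn_mixt_unit_interval => // [|j].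
    exact: is_config_dfwith.
  exact: ltW.
have Phi_ge := nu_le _ (is_config_dfwith i nu_cf pt_prob).
rewrite -subr_ge0 Phi_dfwith shift in Phi_ge.
have := relent_mix_gibbs (h i) g (nu_cf i) t0 t1.
move=> /(ler_wpM2l (ltW (pi_gt0 i))); lra.
Qed.

Lemma minimizer_site_value j :
  relent (nu j) (alpha (h j)) + g * magn (nu j) = - ln (Zgibbs (h j) g).
Proof.
have [nu_cf _] := nu_min.
by rewrite relent_gibbs // minimizer_gibbs relent_self ?sub0r // => s; exact: gibbs_gt0.
Qed.

Lemma stability_vector_sub (G' : R -> R) (B : 'I_L -> R) :
  G' (magn (mixt pi nu)) = g -> is_stability_vector G' h pi nu B ->
  forall i j, B i - B j = ln (Zgibbs (h i) g) - ln (Zgibbs (h j) g).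
Proof.
move=> G'M [_ stabB] i j.
have := stabB (fun k => (k == i)%:R - (k == j)%:R).
rewrite /dFIsing !sum_indicator_sub -![_ true - _ false]/(magn _) G'M.
have := minimizer_site_value i; have := minimizer_site_value j.
rewrite /magn => Sj Si ->; first lra.
transitivity (\sum_(k < L) ((k == i)%:R - (k == j)%:R) * (1 : R)).
  by apply: eq_bigr => k _; rewrite mulr1.
by rewrite sum_indicator_sub subrr.
Qed.

End Minimizer.

Theorem mainTheorem6 (R : realType) (L : nat) (h : 'I_L -> R) (pi : 'I_L -> R)
  (G G1 G2 : R -> R) :
  (2 <= L)%N ->
  injective h ->
  (forall i, 0 < pi i) -> \sum_(i < L) pi i = 1 ->
  C2_on (@closed_unit_interval R) G G1 G2 ->
  {in @closed_unit_interval R &, injective G1} ->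
  forall (nu nu' : 'I_L -> bool -> R) (B B' : 'I_L -> R),
    is_minimizer G h pi nu -> is_minimizer G h pi nu' -> nu <> nu' ->
    is_stability_vector G1 h pi nu B -> is_stability_vector G1 h pi nu' B' ->
    B <> B'.
Proof.
move=> L2 h_inj pi_gt0 pi_sum1 [dG _] _ nu nu' B B' nu_min nu'_min nu_neq stab stab' BB'.
have dG_at mu : is_minimizer G h pi mu ->
    deriv_within (@closed_unit_interval R) G (magn (mixt pi mu)) (G1 (magn (mixt pi mu))).
  move=> [mu_cf _]; apply: (dG _ _).1.
  by apply: magn_mixt_unit_interval => // j; exact: ltW.
pose i0 : 'I_L := Ordinal (ltnW L2); pose i1 : 'I_L := Ordinal L2.
have G1_eq : G1 (magn (mixt pi nu)) = G1 (magn (mixt pi nu')).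
  apply: (@ln_Zgibbs_sub_inj _ (h i0) (h i1)); first by rewrite (inj_eq h_inj).
  rewrite -(stability_vector_sub pi_gt0 pi_sum1 nu_min (dG_at _ nu_min) erefl stab).
  by rewrite -(stability_vector_sub pi_gt0 pi_sum1 nu'_min (dG_at _ nu'_min) erefl stab') BB'.
apply: nu_neq; apply: funext => j.
rewrite (minimizer_gibbs pi_gt0 pi_sum1 nu_min (dG_at _ nu_min)).
by rewrite (minimizer_gibbs pi_gt0 pi_sum1 nu'_min (dG_at _ nu'_min)) G1_eq.
Qed.
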